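(* Let $O$ be the closed disk of radius $R>0$ centered at the origin, and let $P_1,\ldots,P_n$ be closed disks with centers $c_i$ and radii $0\le\rho_i\le R/2$. Let $D_{ij}$ be the closed disk with center $c_{ij}=c_i-c_j$ and radius $\rho_{ij}=\rho_i+\rho_j$, and $\delta_{ij}(x)=\|x-c_{ij}\|-\rho_{ij}$. Let $A_{ij}$ be the Apollonius cell of $D_{ij}$ in the Apollonius diagram of $\{D_{ij}\}_{i,j=1}^n$, and $V_{ij}$ the set of Apollonius vertices of $A_{ij}$ lying in $O$ together with the points of $\partial A_{ij}\cap\partial O$. For $\alpha\in\mathbb{R}$, increase each pupil radius by $\alpha/2$, so that each $D_{ij}$ becomes the disk $D_{ij}^{\alpha}$ of center $c_{ij}$ and radius $\rho_{ij}+\alpha$; let $\alpha^*$ be the minimal value of $\alpha$ for which $O\subseteq\bigcup_{i,j}D_{ij}^{\alpha}$. Then $\alpha^*=\max_{i,j}\max_{p\in V_{ij}}\delta_{ij}(p)$.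
   Context: For a family of disks $D_k$ with centers $c_k$ and radii $\rho_k$, $\delta_k(x)=\|x-c_k\|-\rho_k$; the Apollonius cell of $D_k$ is $\{x\mid\delta_k(x)\le\delta_l(x)\text{ for all }l\}$; points lying in at least three cells are Apollonius vertices, and the vertices of a cell are the Apollonius vertices lying in it. Note that enlarging all $D_{ij}$ by the same amount $\alpha$ does not change the Apollonius diagram.
   Formalization: Some set $V_{ij}$ is assumed nonempty, and an Apollonius vertex is a point lying in the cells of at least three pairwise distinct disks $D_{ij}$, that is, disks differing in center or radius. Each condition added here is assumed in the paper as well or is needed for the statement above to hold. *)

From Stdlib Require Import Reals.
Open Scope R_scope.

Definition pt : Type := (R * R)%type.

Definition dist2 (p q : pt) : R :=
  sqrt ((fst p - fst q) ^ 2 + (snd p - snd q) ^ 2).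

Definition origin : pt := (0, 0).

Definition in_boundary (S : pt -> Prop) (x : pt) : Prop :=
  forall e : R, 0 < e ->
    (exists y, S y /\ dist2 x y < e) /\ (exists z, ~ S z /\ dist2 x z < e).

Definition diskO (Rad : R) (x : pt) : Prop := dist2 x origin <= Rad.

Definition cij (c : nat -> pt) (i j : nat) : pt :=
  (fst (c i) - fst (c j), snd (c i) - snd (c j)).
Definition rhoij (rho : nat -> R) (i j : nat) : R := rho i + rho j.

Definition delta (c : nat -> pt) (rho : nat -> R) (i j : nat) (x : pt) : R :=
  dist2 x (cij c i j) - rhoij rho i j.

Definition cell (n : nat) (c : nat -> pt) (rho : nat -> R) (i j : nat)
  (x : pt) : Prop :=
  forall k l, (k < n)%nat -> (l < n)%nat -> delta c rho i j x <= delta c rho k l x.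

Definition distinct_disks (c : nat -> pt) (rho : nat -> R) (i j k l : nat) : Prop :=
  cij c i j <> cij c k l \/ rhoij rho i j <> rhoij rho k l.

Definition apollonius_vertex (n : nat) (c : nat -> pt) (rho : nat -> R)
  (x : pt) : Prop :=
  exists i1 j1 i2 j2 i3 j3,
    (i1 < n)%nat /\ (j1 < n)%nat /\ (i2 < n)%nat /\ (j2 < n)%nat /\
    (i3 < n)%nat /\ (j3 < n)%nat /\
    distinct_disks c rho i1 j1 i2 j2 /\ distinct_disks c rho i1 j1 i3 j3 /\
    distinct_disks c rho i2 j2 i3 j3 /\
    cell n c rho i1 j1 x /\ cell n c rho i2 j2 x /\ cell n c rho i3 j3 x.

Definition Vset (Rad : R) (n : nat) (c : nat -> pt) (rho : nat -> R)
  (i j : nat) (p : pt) : Prop :=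
  (apollonius_vertex n c rho p /\ cell n c rho i j p /\ diskO Rad p) \/
  (in_boundary (cell n c rho i j) p /\ in_boundary (diskO Rad) p).

Definition covers (Rad : R) (n : nat) (c : nat -> pt) (rho : nat -> R)
  (alpha : R) : Prop :=
  forall x, diskO Rad x ->
    exists i j, (i < n)%nat /\ (j < n)%nat /\
      dist2 x (cij c i j) <= rhoij rho i j + alpha.

Definition is_min_cover (Rad : R) (n : nat) (c : nat -> pt) (rho : nat -> R)
  (alpha : R) : Prop :=
  covers Rad n c rho alpha /\ (forall b, covers Rad n c rho b -> alpha <= b).

From Stdlib Require Import Reals Rgeom Lra Psatz Classical.
From mathcomp Require all_boot all_order all_algebra all_classical all_reals
  topology normedtype derive Rstruct Rstruct_topology.
Open Scope R_scope.

(* Write env x = min_{k,l} δ_kl(x) for the lower envelope of the δ_kl. The disks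
   D^α_kl cover O exactly when env <= α on O, so α* = max_O env, which exists because
   env is 1-Lipschitz and O is compact. A point p of V_ij lies in A_ij, where
   δ_ij(p) = env(p) <= α*; it remains to find one where equality holds.

   Let x0 maximise env on O, and let D_ij realise env(x0).
   - If x0 is interior to O and lies in the cells of at most two distinct disks, then
     env is the smaller of their two δ's near x0, and moving x0 away from both centres
     increases it. So x0 is an Apollonius vertex.
   - If x0 is on ∂O and on ∂A_ij, it belongs to V_ij.
   - Otherwise env = δ_ij near x0. As D_ji is the mirror image of D_ij, A_ij lies in
     the half-plane x·c_ij >= 0, so x0·c_ij > 0 unless c_ij = 0, and then rotating x0
     along ∂O away from c_ij would increase env. Hence c_ij = 0 and δ_ij is constant,
     equal to α*, on ∂O. Nonemptiness of V gives a point of O in the cell of a disk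
     D_kl distinct from D_ij; its radial projection q0 onto ∂O has
     δ_kl(q0) <= δ_ij(q0). If q0 lies in A_ij, it lies on the boundary of A_ij or of
     A_kl, because δ_ij - δ_kl is nowhere locally constant. Otherwise, walking along
     ∂O from x0 to q0, the last point of A_ij lies on ∂A_ij. *)

Definition dot (u v : pt) : R := fst u * fst v + snd u * snd v.
Definition sub (p q : pt) : pt := (fst p - fst q, snd p - snd q).
Definition sqdist (p q : pt) : R := dot (sub p q) (sub p q).
Definition along (x w : pt) (t : R) : pt := (fst x + t * fst w, snd x + t * snd w).
Definition scale (l : R) (p : pt) : pt := (l * fst p, l * snd p).
Definition rot (p : pt) (th : R) : pt := (xr (fst p) (snd p) th, yr (fst p) (snd p) th).

Definition lipschitz (L : R) (f : pt -> R) : Prop :=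
  forall x y, Rabs (f x - f y) <= L * dist2 x y.

Lemma Rabs_le_inv x a : Rabs x <= a -> - a <= x <= a.
Proof. unfold Rabs; destruct (Rcase_abs x); lra. Qed.

Lemma dot_self_ge0 u : 0 <= dot u u.
Proof. unfold dot; nra. Qed.

Lemma dot_self_eq0 u : dot u u = 0 -> u = origin.
Proof.
  destruct u as [u1 u2]; unfold dot, origin; simpl; intros H.
  f_equal; nra.
Qed.

Lemma sqdist_ge0 p q : 0 <= sqdist p q.
Proof. apply dot_self_ge0. Qed.

Lemma dist2_sqrt p q : dist2 p q = sqrt (sqdist p q).
Proof. unfold dist2, sqdist, dot, sub; simpl; f_equal; ring. Qed.

Lemma dist2_ge0 p q : 0 <= dist2 p q.
Proof. apply sqrt_pos. Qed.

Lemma dist2_sqr p q : dist2 p q * dist2 p q = sqdist p q.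
Proof. rewrite dist2_sqrt; apply sqrt_sqrt, sqdist_ge0. Qed.

Lemma dist2_le_iff p q p' q' : dist2 p q <= dist2 p' q' <-> sqdist p q <= sqdist p' q'.
Proof.
  rewrite !dist2_sqrt; split.
  - apply sqrt_le_0; apply sqdist_ge0.
  - apply sqrt_le_1_alt.
Qed.

Lemma dist2_lt_iff p q p' q' : dist2 p q < dist2 p' q' <-> sqdist p q < sqdist p' q'.
Proof.
  rewrite !dist2_sqrt; split.
  - apply sqrt_lt_0_alt.
  - intros H; apply sqrt_lt_1_alt; split; [apply sqdist_ge0 | exact H].
Qed.

Lemma dist2_euc p q : dist2 p q = dist_euc (fst p) (snd p) (fst q) (snd q).
Proof. unfold dist2, dist_euc; now rewrite !Rsqr_pow2. Qed.

Lemma dist2_sym p q : dist2 p q = dist2 q p.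
Proof. rewrite !dist2_euc; apply distance_symm. Qed.

Lemma dist2_refl p : dist2 p p = 0.
Proof. rewrite dist2_euc; apply distance_refl. Qed.

Lemma dist2_triangle x y z : dist2 x z <= dist2 x y + dist2 y z.
Proof. rewrite !dist2_euc; apply triangle. Qed.

Lemma dist2_reverse_triangle x y z : Rabs (dist2 x z - dist2 y z) <= dist2 x y.
Proof.
  pose proof (dist2_triangle x y z); pose proof (dist2_triangle y x z).
  rewrite (dist2_sym y x) in *; apply Rabs_le; lra.
Qed.

Lemma dist2_scale l m p : dist2 (scale l p) (scale m p) = Rabs (l - m) * dist2 p origin.
Proof.
  unfold dist2, scale, origin; cbn [fst snd].
  replace ((l * fst p - m * fst p) ^ 2 + (l * snd p - m * snd p) ^ 2)
    with ((l - m)² * ((fst p - 0) ^ 2 + (snd p - 0) ^ 2)) by (unfold Rsqr; ring).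
  now rewrite sqrt_mult_alt, sqrt_Rsqr_abs by apply Rle_0_sqr.
Qed.

Lemma scale_0 p : scale 0 p = origin.
Proof. unfold scale, origin; f_equal; ring. Qed.

Lemma scale_1 p : scale 1 p = p.
Proof. destruct p; unfold scale; simpl; f_equal; ring. Qed.

Lemma dist2_scale_origin l p : dist2 (scale l p) origin = Rabs l * dist2 p origin.
Proof.
  replace (dist2 (scale l p) origin) with (dist2 (scale l p) (scale 0 p)) by now rewrite scale_0.
  now rewrite dist2_scale, Rminus_0_r.
Qed.

Lemma dist2_scale_self l p : dist2 (scale l p) p = Rabs (l - 1) * dist2 p origin.
Proof.
  replace (dist2 (scale l p) p) with (dist2 (scale l p) (scale 1 p)) by now rewrite scale_1.
  apply dist2_scale.
Qed.

Lemma sqdist_along x w t p :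
  sqdist (along x w t) p = sqdist x p + 2 * t * dot (sub x p) w + t ^ 2 * dot w w.
Proof. unfold sqdist, dot, sub, along; simpl; ring. Qed.

Lemma dist2_along x w t : dist2 (along x w t) x = Rabs t * dist2 w origin.
Proof.
  rewrite !dist2_sqrt, <- sqrt_Rsqr_abs, <- sqrt_mult_alt by apply Rle_0_sqr; f_equal.
  unfold sqdist, dot, sub, along, origin, Rsqr; simpl; ring.
Qed.

Lemma exists_small_pos K e : 0 <= K -> 0 < e -> exists t, 0 < t < 1 /\ t * K < e.
Proof.
  intros HK He; exists (Rmin (1 / 2) (e / (2 * (K + 1)))).
  assert (Hq : 0 < e / (2 * (K + 1))) by (apply Rdiv_lt_0_compat; lra).
  assert (Hm : e / (2 * (K + 1)) * (2 * (K + 1)) = e) by (field; lra).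
  pose proof (Rmin_l (1 / 2) (e / (2 * (K + 1)))).
  pose proof (Rmin_r (1 / 2) (e / (2 * (K + 1)))).
  assert (0 < Rmin (1 / 2) (e / (2 * (K + 1)))) by (apply Rmin_glb_lt; lra).
  split; [lra | nra].
Qed.

Lemma dist2_le_abs_sum x y : dist2 x y <= Rabs (fst x - fst y) + Rabs (snd x - snd y).
Proof.
  pose proof (Rabs_pos (fst x - fst y)); pose proof (Rabs_pos (snd x - snd y)).
  apply Rsqr_incr_0_var; [| lra]; unfold Rsqr; rewrite dist2_sqr.
  unfold sqdist, dot, sub; cbn [fst snd].
  assert (Habs : forall a, Rabs a * Rabs a = a * a)
    by (intros a; rewrite <- Rabs_mult; apply Rabs_right, Rle_ge, Rle_0_sqr).
  rewrite <- (Habs (fst x - fst y)), <- (Habs (snd x - snd y)); nra.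
Qed.

Lemma Rabs_coord_le x : Rabs (fst x) <= dist2 x origin /\ Rabs (snd x) <= dist2 x origin.
Proof.
  rewrite dist2_sqrt, <- !sqrt_Rsqr_abs; unfold sqdist, dot, sub, origin, Rsqr; cbn [fst snd].
  split; apply sqrt_le_1_alt; nra.
Qed.

(** * Rotations about the origin *)

Lemma Rabs_sin_sub a b : Rabs (sin a - sin b) <= Rabs (a - b).
Proof.
  destruct (MVT_abs sin cos b a (fun x _ => derivable_pt_lim_sin x)) as [x [-> _]].
  pose proof (COS_bound x).
  rewrite <- (Rmult_1_l (Rabs (a - b))) at 2.
  apply Rmult_le_compat_r; [apply Rabs_pos | apply Rabs_le; lra].
Qed.

Lemma Rabs_cos_sub a b : Rabs (cos a - cos b) <= Rabs (a - b).
Proof.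
  destruct (MVT_abs cos (fun x => - sin x) b a (fun x _ => derivable_pt_lim_cos x))
    as [x [-> _]].
  pose proof (SIN_bound x).
  rewrite <- (Rmult_1_l (Rabs (a - b))) at 2.
  apply Rmult_le_compat_r; [apply Rabs_pos | apply Rabs_le; lra].
Qed.

Lemma cos_lt_1 h : 0 < h < 1 -> cos h < 1.
Proof.
  intros Hh; pose proof PI2_1.
  replace h with (2 * (h / 2)) by field; rewrite cos_2a_sin.
  assert (0 < sin (h / 2)) by (apply sin_gt_0; lra).
  nra.
Qed.

Lemma exists_angle a b : a * a + b * b = 1 -> exists th, cos th = a /\ sin th = b.
Proof.
  intros Hab; assert (Ha : -1 <= a <= 1) by nra.
  assert (Hs : sin (acos a) = Rabs b).
  { rewrite sin_acos by exact Ha; rewrite <- sqrt_Rsqr_abs; f_equal; unfold Rsqr; lra. }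
  destruct (Rle_dec 0 b).
  - exists (acos a); rewrite cos_acos, Hs, Rabs_right by lra; now split.
  - exists (- acos a); rewrite cos_neg, sin_neg, cos_acos, Hs, Rabs_left by lra.
    split; [reflexivity | ring].
Qed.

Lemma rot_0 p : rot p 0 = p.
Proof. destruct p; unfold rot; cbn [fst snd]; now destruct (rotation_0 r r0) as [-> ->]. Qed.

Lemma dist2_rot p q th : dist2 (rot p th) (rot q th) = dist2 p q.
Proof. rewrite !dist2_euc; symmetry; apply isometric_rotation. Qed.

Lemma dist2_rot_origin p th : dist2 (rot p th) origin = dist2 p origin.
Proof.
  replace origin with (rot origin th) at 1 by (unfold rot, origin, xr, yr; cbn; f_equal; ring).
  apply dist2_rot.
Qed.

Lemma dot_rot p m th :
  dot (rot p th) m = cos th * dot p m + sin th * (snd p * fst m - fst p * snd m).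
Proof. unfold dot, rot, xr, yr; cbn [fst snd]; ring. Qed.

Lemma dist2_rot_angle p a b : dist2 (rot p a) (rot p b) <= 2 * Rabs (a - b) * dist2 p origin.
Proof.
  pose proof (Rsqr_le_abs_1 _ _ (Rabs_sin_sub a b)) as Hs.
  pose proof (Rsqr_le_abs_1 _ _ (Rabs_cos_sub a b)) as Hc.
  pose proof (Rsqr_abs (a - b)); pose proof (Rabs_pos (a - b)).
  pose proof (dist2_ge0 p origin); pose proof (dist2_sqr p origin).
  pose proof (sqdist_ge0 p origin).
  apply Rsqr_incr_0_var; [| nra]; unfold Rsqr in *; rewrite dist2_sqr.
  replace (sqdist (rot p a) (rot p b))
    with (((cos a - cos b) * (cos a - cos b) + (sin a - sin b) * (sin a - sin b)) * sqdist p origin)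
    by (unfold sqdist, dot, sub, rot, xr, yr, origin; cbn [fst snd]; ring).
  nra.
Qed.

Lemma rot_surj p q : dist2 q origin = dist2 p origin -> exists th, rot p th = q.
Proof.
  intros Hpq.
  assert (Hn : sqdist q origin = sqdist p origin) by now rewrite <- !dist2_sqr, Hpq.
  destruct p as [x1 x2], q as [q1 q2]; unfold sqdist, dot, sub, origin in Hn; cbn [fst snd] in Hn.
  set (N := x1 * x1 + x2 * x2).
  destruct (Req_dec N 0) as [N0 | N0].
  - unfold N in N0; exists 0; rewrite rot_0.
    assert (x1 = 0 /\ x2 = 0) as [-> ->] by (split; nra).
    f_equal; nra.
  - destruct (exists_angle ((x1 * q1 + x2 * q2) / N) ((x2 * q1 - x1 * q2) / N)) as [th [Hc Hs]].
    { apply Rmult_eq_reg_r with (N * N); [| nra].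
      field_simplify; [| exact N0]; unfold N; nra. }
    exists th; unfold rot, xr, yr; cbn [fst snd]; rewrite Hc, Hs.
    f_equal; unfold N in *; field; exact N0.
Qed.

Lemma rot_away p m e : 0 < dot p m -> 0 < e ->
  exists y, dist2 y origin = dist2 p origin /\ dist2 p y < e /\ sqdist p m < sqdist y m.
Proof.
  intros Hpm He.
  destruct (exists_small_pos (2 * dist2 p origin) e) as [h [Hh Hhe]];
    [pose proof (dist2_ge0 p origin); lra | exact He |].
  set (J := snd p * fst m - fst p * snd m).
  set (th := if Rle_dec 0 J then - h else h).
  assert (Hcos : cos th < 1)
    by (unfold th; destruct (Rle_dec 0 J); rewrite ?cos_neg; now apply cos_lt_1).
  assert (HsJ : sin th * J <= 0).
  { unfold th; destruct (Rle_dec 0 J); rewrite ?sin_neg;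
      assert (0 <= sin h) by (apply sin_ge_0; pose proof PI2_1; lra); nra. }
  exists (rot p th); split; [apply dist2_rot_origin | split].
  - rewrite <- (rot_0 p) at 1; eapply Rle_lt_trans; [apply dist2_rot_angle |].
    unfold th; destruct (Rle_dec 0 J);
      rewrite Rminus_0_l, ?Ropp_involutive, ?Rabs_Ropp, Rabs_right by lra; lra.
  - assert (Hn : sqdist (rot p th) origin = sqdist p origin)
      by now rewrite <- !dist2_sqr, dist2_rot_origin.
    assert (Hd := dot_rot p m th); fold J in Hd.
    replace (sqdist p m) with (sqdist p origin - 2 * dot p m + dot m m)
      by (unfold sqdist, dot, sub, origin; cbn [fst snd]; ring).
    replace (sqdist (rot p th) m) with (sqdist (rot p th) origin - 2 * dot (rot p th) m + dot m m)
      by (unfold sqdist, dot, sub, origin; cbn [fst snd]; ring).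
    nra.
Qed.

Lemma exists_orthogonal v : exists w, dot v w = 0 /\ 0 < dot w w.
Proof.
  destruct v as [v1 v2]; destruct (Req_dec (dot (v1, v2) (v1, v2)) 0) as [Z | NZ].
  - apply dot_self_eq0 in Z; injection Z as -> ->.
    exists (1, 0); unfold dot; cbn [fst snd]; split; lra.
  - exists (- v2, v1); unfold dot in *; cbn [fst snd] in *; split; [ring | nra].
Qed.

Lemma exists_dir_nonneg_dot2 u v : exists w, 0 < dot w w /\ 0 <= dot u w /\ 0 <= dot v w.
Proof.
  destruct u as [u1 u2], v as [v1 v2]; unfold dot; cbn [fst snd].
  destruct (Rle_dec 0 (u1 * v1 + u2 * v2)) as [Huv | Huv].
  - destruct (Req_dec ((u1 + v1) * (u1 + v1) + (u2 + v2) * (u2 + v2)) 0) as [Z | NZ].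
    + destruct (Rplus_sqr_eq_0 _ _ Z) as [Z1 Z2].
      assert (v1 = - u1) as -> by lra; assert (v2 = - u2) as -> by lra.
      assert (u1 * u1 + u2 * u2 = 0) as [-> ->]%Rplus_sqr_eq_0 by nra.
      exists (1, 0); cbn [fst snd]; split; [| split]; lra.
    + exists (u1 + v1, u2 + v2); cbn [fst snd]; split; [| split]; nra.
  - destruct (Rle_dec 0 (u1 * v2 - u2 * v1)).
    + exists (- u2, u1); cbn [fst snd]; split; [| split]; nra.
    + exists (u2, - u1); cbn [fst snd]; split; [| split]; nra.
Qed.

(* Squared, the identity would make r * dist2 z b affine in z near q. But dist2 _ b
   is strictly convex along a direction orthogonal to q - b, so r = 0, and the
   bisector of a and b contains no ball. *)
Lemma dist2_sub_not_locally_const a b r q e : a <> b -> 0 < e ->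
  exists z, dist2 q z < e /\ dist2 z a - dist2 z b <> r.
Proof.
  intros Hab He; apply NNPP; intros Hall.
  assert (Hsq : forall z, dist2 q z < e -> sqdist z a = sqdist z b + 2 * r * dist2 z b + r * r).
  { intros z Hz; rewrite <- !dist2_sqr.
    replace (dist2 z a) with (dist2 z b + r)
      by (apply NNPP; intros Hne; apply Hall; exists z; split; [exact Hz | lra]).
    ring. }
  assert (Hnear : forall w, exists t, 0 < t /\
            dist2 q (along q w t) < e /\ dist2 q (along q w (- t)) < e).
  { intros w; destruct (exists_small_pos (dist2 w origin) e) as [t [Ht Hte]];
      [apply dist2_ge0 | exact He |].
    exists t; rewrite !(dist2_sym q), !dist2_along, Rabs_Ropp, Rabs_right by lra.
    repeat split; lra. }
  assert (Hr : r = 0).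
  { destruct (exists_orthogonal (sub q b)) as [w [Hw0 Hw]].
    destruct (Hnear w) as [t [Ht [H1 H2]]].
    pose proof (Hsq _ H1) as E1; pose proof (Hsq _ H2) as E2.
    pose proof (Hsq q ltac:(rewrite dist2_refl; lra)) as E0.
    rewrite !sqdist_along in E1, E2; rewrite Hw0 in E1, E2.
    assert (Hd : dist2 (along q w t) b = dist2 (along q w (- t)) b)
      by (rewrite !dist2_sqrt, !sqdist_along, Hw0; f_equal; ring).
    rewrite <- Hd in E2.
    pose proof (dist2_sqr (along q w t) b) as D1; rewrite sqdist_along, Hw0 in D1.
    pose proof (dist2_sqr q b) as D0.
    pose proof (dist2_ge0 (along q w t) b); pose proof (dist2_ge0 q b).
    assert (0 < t ^ 2 * dot w w) by (apply Rmult_lt_0_compat; [apply pow_lt |]; lra).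
    assert (dist2 q b < dist2 (along q w t) b)
      by (apply Rsqr_incrst_0; unfold Rsqr; lra).
    nra. }
  subst r.
  destruct (Hnear (sub b a)) as [t [Ht [H1 _]]].
  pose proof (Hsq _ H1) as E1; pose proof (Hsq q ltac:(rewrite dist2_refl; lra)) as E0.
  rewrite !sqdist_along in E1.
  replace (dot (sub q a) (sub b a)) with (dot (sub q b) (sub b a) + dot (sub b a) (sub b a)) in E1
    by (unfold dot, sub; cbn [fst snd]; ring).
  apply Hab; symmetry.
  assert (Z : dot (sub b a) (sub b a) = 0) by (pose proof (dot_self_ge0 (sub b a)); nra).
  apply dot_self_eq0 in Z; destruct a, b; unfold sub, origin in Z; injection Z as Z1 Z2.
  cbn [fst snd] in *; f_equal; lra.
Qed.

(** * Connectedness of circles *)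

Lemma last_nonneg (psi : R -> R) K : 0 <= K ->
  (forall s t, Rabs (psi s - psi t) <= K * Rabs (s - t)) -> 0 <= psi 0 -> psi 1 < 0 ->
  exists ts, 0 <= ts <= 1 /\ 0 <= psi ts /\
    forall e, 0 < e -> exists t, 0 <= t <= 1 /\ Rabs (t - ts) < e /\ psi t < 0.
Proof.
  intros HK Hlip H0 H1.
  set (E := fun t => 0 <= t <= 1 /\ 0 <= psi t).
  destruct (completeness E) as [ts [Hub Hlub]].
  { exists 1; intros t [Ht _]; lra. }
  { exists 0; split; [lra | exact H0]. }
  assert (Hts0 : 0 <= ts) by (apply Hub; split; [lra | exact H0]).
  assert (Hts1 : ts <= 1) by (apply Hlub; intros t [Ht _]; lra).
  assert (Hpos : 0 <= psi ts).
  { apply Rnot_lt_le; intros Hneg.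
    set (d := - psi ts / (K + 1)).
    assert (Hd : 0 < d) by (apply Rdiv_lt_0_compat; lra).
    assert (HKd : K * d = - psi ts - d) by (unfold d; field; lra).
    assert (Hnub : ~ is_upper_bound E (ts - d)) by (intros U; specialize (Hlub _ U); lra).
    destruct (not_all_ex_not _ _ Hnub) as [t Ht].
    apply imply_to_and in Ht as [[Ht01 Hpt] Htd].
    assert (t <= ts) by (apply Hub; split; assumption).
    pose proof (Hlip t ts) as Hl; rewrite Rabs_left1 with (a := t - ts) in Hl by lra.
    pose proof (Rle_abs (psi t - psi ts)).
    assert (K * - (t - ts) <= K * d) by (apply Rmult_le_compat_l; lra).
    lra. }
  assert (Hlt1 : ts < 1) by (destruct (Req_dec ts 1) as [-> |]; lra).
  exists ts; split; [lra | split; [exact Hpos |]].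
  intros e He; pose proof (Rmin_l e (1 - ts)); pose proof (Rmin_r e (1 - ts)).
  set (m := Rmin e (1 - ts)) in *.
  assert (0 < m) by (apply Rmin_glb_lt; lra).
  exists (ts + m / 2); split; [lra | split].
  - rewrite Rabs_right; lra.
  - apply Rnot_le_lt; intros Hge.
    assert (ts + m / 2 <= ts) by (apply Hub; split; [lra | exact Hge]).
    lra.
Qed.

Lemma circle_sign_change (phi : pt -> R) L x0 q0 : 0 <= L -> lipschitz L phi ->
  dist2 q0 origin = dist2 x0 origin -> 0 <= phi x0 -> phi q0 < 0 ->
  exists q, dist2 q origin = dist2 x0 origin /\ 0 <= phi q /\
    forall e, 0 < e -> exists z, dist2 q z < e /\ phi z < 0.
Proof.
  intros HL Hphi Hq0 H0 H1.
  destruct (rot_surj x0 q0 Hq0) as [th Hth].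
  set (K := 2 * Rabs th * dist2 x0 origin).
  assert (HK : 0 <= K)
    by (pose proof (Rabs_pos th); pose proof (dist2_ge0 x0 origin); unfold K; nra).
  assert (Hpath : forall s t, dist2 (rot x0 (s * th)) (rot x0 (t * th)) <= K * Rabs (s - t)).
  { intros s t; eapply Rle_trans; [apply dist2_rot_angle |].
    rewrite <- Rmult_minus_distr_r, Rabs_mult; unfold K; apply Req_le; ring. }
  destruct (last_nonneg (fun t => phi (rot x0 (t * th))) (L * K)) as [ts [_ [Hts Hnear]]].
  - now apply Rmult_le_pos.
  - intros s t; eapply Rle_trans; [apply Hphi |].
    rewrite Rmult_assoc; apply Rmult_le_compat_l; [exact HL | apply Hpath].
  - now rewrite Rmult_0_l, rot_0.
  - now rewrite Rmult_1_l, Hth.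
  - exists (rot x0 (ts * th)); split; [apply dist2_rot_origin | split; [exact Hts |]].
    intros e He.
    destruct (Hnear (e / (K + 1))) as [t [_ [Ht Hneg]]]; [apply Rdiv_lt_0_compat; lra |].
    exists (rot x0 (t * th)); split; [| exact Hneg].
    eapply Rle_lt_trans; [apply Hpath |]; rewrite Rabs_minus_sym.
    assert (HKe : K * (e / (K + 1)) = e - e / (K + 1)) by (field; lra).
    assert (0 < e / (K + 1)) by (apply Rdiv_lt_0_compat; lra).
    apply Rle_lt_trans with (K * (e / (K + 1))); [apply Rmult_le_compat_l |]; lra.
Qed.

Fixpoint min_upto (g : nat -> R) (N : nat) : R :=
  match N with O => g O | S N' => Rmin (min_upto g N') (g N) end.

Lemma min_upto_le g N k : (k <= N)%nat -> min_upto g N <= g k.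
Proof.
  induction N as [| N IH]; intros Hk; cbn.
  - now replace k with 0%nat by lia; right.
  - destruct (Nat.eq_dec k (S N)) as [-> | Hne]; [apply Rmin_r |].
    eapply Rle_trans; [apply Rmin_l | apply IH; lia].
Qed.

Lemma min_upto_attained g N : exists k, (k <= N)%nat /\ min_upto g N = g k.
Proof.
  induction N as [| N [k [Hk E]]]; [now exists 0%nat |]; cbn.
  unfold Rmin; destruct (Rle_dec (min_upto g N) (g (S N))).
  - exists k; split; [lia | exact E].
  - exists (S N); split; [lia | reflexivity].
Qed.

Lemma Rabs_min_upto_sub g h N L :
  (forall k, Rabs (g k - h k) <= L) -> Rabs (min_upto g N - min_upto h N) <= L.
Proof.
  intros H; induction N as [| N IH]; cbn; [apply H |].
  apply Rabs_le_inv in IH; pose proof (Rabs_le_inv _ _ (H (S N))).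
  apply Rabs_le; unfold Rmin.
  destruct (Rle_dec (min_upto g N) (g (S N))), (Rle_dec (min_upto h N) (h (S N))); lra.
Qed.

Lemma exists_pos_lower_bound (h : nat -> nat -> R) N : exists g, 0 < g /\
  forall k l, (k < N)%nat -> (l < N)%nat -> 0 < h k l -> g <= h k l.
Proof.
  set (pos k l := if Rlt_dec 0 (h k l) then h k l else 1).
  assert (Hpos : forall k l, 0 < pos k l) by (intros k l; unfold pos; destruct Rlt_dec; lra).
  exists (min_upto (fun k => min_upto (pos k) N) N); split.
  - destruct (min_upto_attained (fun k => min_upto (pos k) N) N) as [k [_ ->]].
    destruct (min_upto_attained (pos k) N) as [l [_ ->]].
    apply Hpos.
  - intros k l Hk Hl Hh.
    replace (h k l) with (pos k l) by (unfold pos; destruct Rlt_dec; [reflexivity | contradiction]).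
    eapply Rle_trans; [apply (min_upto_le _ _ k); lia |].
    apply min_upto_le; lia.
Qed.

Lemma in_boundary_diskO_dist Rad q : in_boundary (diskO Rad) q -> dist2 q origin = Rad.
Proof.
  unfold diskO; intros H; apply Rle_antisym; apply Rnot_lt_le; intros Hlt.
  - destruct (H (dist2 q origin - Rad) ltac:(lra)) as [[y [Hy Hd]] _].
    pose proof (dist2_triangle q y origin); lra.
  - destruct (H (Rad - dist2 q origin) ltac:(lra)) as [_ [z [Hz Hd]]].
    pose proof (dist2_triangle z q origin); rewrite dist2_sym in Hd; lra.
Qed.

Lemma in_boundary_diskO_of_dist Rad q : 0 < Rad -> dist2 q origin = Rad ->
  in_boundary (diskO Rad) q.
Proof.
  unfold diskO; intros HR Hq e He; split.
  - exists q; rewrite dist2_refl; split; lra.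
  - exists (scale (1 + e / (2 * Rad)) q).
    assert (Hs : 0 < e / (2 * Rad)) by (apply Rdiv_lt_0_compat; lra).
    rewrite (dist2_sym q), dist2_scale_origin, dist2_scale_self, Hq, !Rabs_right by lra.
    split; [nra |].
    replace ((1 + e / (2 * Rad) - 1) * Rad) with (e / 2) by (field; lra); lra.
Qed.

Lemma nbhd_of_not_in_boundary (S : pt -> Prop) x : S x -> ~ in_boundary S x ->
  exists e, 0 < e /\ forall z, dist2 x z < e -> S z.
Proof.
  intros Hx Hb; apply not_all_ex_not in Hb as [e He].
  apply imply_to_and in He as [He Hnot]; exists e; split; [exact He |].
  intros z Hz; apply NNPP; intros Hnz; apply Hnot; split.
  - exists x; rewrite dist2_refl; auto.
  - exists z; auto.
Qed.

Lemma exists_circle_point_beyond Rad p : 0 < Rad -> dist2 p origin <= Rad ->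
  exists q, dist2 q origin = Rad /\ dist2 q p = Rad - dist2 p origin.
Proof.
  intros HR Hp; pose proof (dist2_ge0 p origin).
  destruct (Req_dec (dist2 p origin) 0) as [Z | NZ].
  - exists (Rad, 0).
    assert (E : dist2 (Rad, 0) origin = Rad).
    { rewrite dist2_sqrt; replace (sqdist (Rad, 0) origin) with (Rad * Rad)
        by (unfold sqdist, dot, sub, origin; cbn [fst snd]; ring).
      apply sqrt_square; lra. }
    split; [exact E |].
    pose proof (dist2_reverse_triangle (Rad, 0) p origin) as T.
    rewrite E, Z, Rminus_0_r, Rabs_right in T by lra.
    pose proof (dist2_triangle (Rad, 0) origin p); rewrite (dist2_sym origin p) in *; lra.
  - set (l := Rad / dist2 p origin).
    assert (Hl : l * dist2 p origin = Rad) by (unfold l; field; exact NZ).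
    assert (Hl1 : 1 <= l) by (apply Rmult_le_reg_r with (dist2 p origin); lra).
    exists (scale l p); rewrite dist2_scale_origin, dist2_scale_self, !Rabs_right by lra.
    split; lra.
Qed.

(** * The lower envelope of the δ_kl *)

Section Apollonius.
Variables (n : nat) (c : nat -> pt) (rho : nat -> R).

Definition env (x : pt) : R :=
  min_upto (fun k => min_upto (fun l => delta c rho k l x) (pred n)) (pred n).

Lemma env_le x k l : (k < n)%nat -> (l < n)%nat -> env x <= delta c rho k l x.
Proof.
  intros Hk Hl; eapply Rle_trans; [apply (min_upto_le _ _ k); lia |].
  apply (min_upto_le (fun l => delta c rho k l x)); lia.
Qed.

Lemma env_attained x : (0 < n)%nat ->
  exists k l, (k < n)%nat /\ (l < n)%nat /\ env x = delta c rho k l x.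
Proof.
  intros Hn; unfold env.
  destruct (min_upto_attained (fun k => min_upto (fun l => delta c rho k l x) (pred n)) (pred n))
    as [k [Hk ->]].
  destruct (min_upto_attained (fun l => delta c rho k l x) (pred n)) as [l [Hl ->]].
  exists k, l; repeat split; lia.
Qed.

Lemma delta_lipschitz k l : lipschitz 1 (delta c rho k l).
Proof.
  intros x y; rewrite Rmult_1_l; unfold delta.
  replace (dist2 x (cij c k l) - rhoij rho k l - (dist2 y (cij c k l) - rhoij rho k l))
    with (dist2 x (cij c k l) - dist2 y (cij c k l)) by ring.
  apply dist2_reverse_triangle.
Qed.

Lemma env_lipschitz : lipschitz 1 env.
Proof.
  intros x y; apply Rabs_min_upto_sub; intros k.
  apply Rabs_min_upto_sub; intros l; apply delta_lipschitz.
Qed.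

Lemma delta_eq_env_of_cell i j x : (i < n)%nat -> (j < n)%nat ->
  cell n c rho i j x -> delta c rho i j x = env x.
Proof.
  intros Hi Hj Hx; destruct (env_attained x) as (k & l & Hk & Hl & E); [lia |].
  pose proof (env_le x i j Hi Hj); pose proof (Hx k l Hk Hl); lra.
Qed.

Lemma cell_of_delta_le_env i j x : delta c rho i j x <= env x -> cell n c rho i j x.
Proof. intros H k l Hk Hl; pose proof (env_le x k l Hk Hl); lra. Qed.

Lemma cell_of_in_boundary i j p : in_boundary (cell n c rho i j) p -> cell n c rho i j p.
Proof.
  intros H k l Hk Hl; apply Rnot_lt_le; intros Hlt.
  destruct (H ((delta c rho i j p - delta c rho k l p) / 2) ltac:(lra)) as [[y [Hy Hd]] _].
  pose proof (Hy k l Hk Hl).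
  pose proof (Rabs_le_inv _ _ (delta_lipschitz i j p y)).
  pose proof (Rabs_le_inv _ _ (delta_lipschitz k l p y)).
  lra.
Qed.

Lemma Vset_cell_diskO Rad i j p : Vset Rad n c rho i j p -> cell n c rho i j p /\ diskO Rad p.
Proof.
  intros [(_ & Hc & Hd) | [Hc Hd]]; [auto |].
  split; [now apply cell_of_in_boundary |].
  unfold diskO; rewrite (in_boundary_diskO_dist _ _ Hd); lra.
Qed.

Lemma delta_not_distinct i j k l x : ~ distinct_disks c rho i j k l ->
  delta c rho i j x = delta c rho k l x.
Proof.
  intros H; apply not_or_and in H as [H1 H2].
  unfold delta; now rewrite (NNPP _ H1), (NNPP _ H2).
Qed.

Lemma cell_dot_center_nonneg i j z : (i < n)%nat -> (j < n)%nat ->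
  cell n c rho i j z -> 0 <= dot z (cij c i j).
Proof.
  intros Hi Hj Hz; specialize (Hz j i Hj Hi); unfold delta, rhoij in Hz.
  assert (H : dist2 z (cij c i j) <= dist2 z (cij c j i)) by lra.
  apply dist2_le_iff in H; unfold sqdist, dot, sub, cij in *; cbn [fst snd] in *; nra.
Qed.

Lemma pick_distinct_cell i j p : (i < n)%nat -> (j < n)%nat -> apollonius_vertex n c rho p ->
  exists k l, (k < n)%nat /\ (l < n)%nat /\ cell n c rho k l p /\ distinct_disks c rho i j k l.
Proof.
  intros Hi Hj (a1 & b1 & a2 & b2 & _ & _ & H1 & H2 & H3 & H4 & _ & _ & D12 & _ & _ & C1 & C2 & _).
  destruct (classic (distinct_disks c rho i j a1 b1)) as [X | X]; [exists a1, b1; auto |].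
  destruct (classic (distinct_disks c rho i j a2 b2)) as [Y | Y]; [exists a2, b2; auto |].
  apply not_or_and in X as [X1 X2]; apply not_or_and in Y as [Y1 Y2].
  apply NNPP in X1, X2, Y1, Y2.
  exfalso; destruct D12 as [D | D]; apply D; congruence.
Qed.

Lemma two_active_of_not_vertex x i1 j1 : ~ apollonius_vertex n c rho x ->
  (i1 < n)%nat -> (j1 < n)%nat -> cell n c rho i1 j1 x ->
  exists i2 j2, (i2 < n)%nat /\ (j2 < n)%nat /\ cell n c rho i2 j2 x /\
    forall k l, (k < n)%nat -> (l < n)%nat -> cell n c rho k l x ->
      ~ distinct_disks c rho i1 j1 k l \/ ~ distinct_disks c rho i2 j2 k l.
Proof.
  intros Hnv Hi1 Hj1 C1.
  destruct (classic (exists i2 j2, (i2 < n)%nat /\ (j2 < n)%nat /\ cell n c rho i2 j2 x /\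
                       distinct_disks c rho i1 j1 i2 j2))
    as [(i2 & j2 & Hi2 & Hj2 & C2 & D12) | No].
  - exists i2, j2; repeat split; auto; intros k l Hk Hl Ck.
    destruct (classic (distinct_disks c rho i1 j1 k l)) as [D1 | D1]; [| now left].
    destruct (classic (distinct_disks c rho i2 j2 k l)) as [D2 | D2]; [| now right].
    exfalso; apply Hnv; exists i1, j1, i2, j2, k, l; repeat split; auto.
  - exists i1, j1; repeat split; auto; intros k l Hk Hl Ck; left.
    intros D; apply No; exists k, l; auto.
Qed.

Lemma env_locally_active x0 : (0 < n)%nat -> exists g, 0 < g /\ forall y, dist2 x0 y < g ->
  exists k l, (k < n)%nat /\ (l < n)%nat /\ cell n c rho k l x0 /\ env y = delta c rho k l y.
Proof.
  intros Hn.
  destruct (exists_pos_lower_bound (fun k l => delta c rho k l x0 - env x0) n) as [g [Hg Hgap]].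
  destruct (env_attained x0 Hn) as (i & j & Hi & Hj & Ex0).
  exists (g / 2); split; [lra |]; intros y Hy.
  destruct (env_attained y Hn) as (k & l & Hk & Hl & Ey).
  exists k, l; repeat split; auto.
  apply cell_of_delta_le_env; apply Rnot_lt_le; intros Hlt.
  pose proof (Hgap k l Hk Hl ltac:(cbv beta; lra)) as G; cbv beta in G.
  pose proof (Rabs_le_inv _ _ (delta_lipschitz k l x0 y)).
  pose proof (Rabs_le_inv _ _ (delta_lipschitz i j x0 y)).
  pose proof (env_le y i j Hi Hj).
  lra.
Qed.

Lemma two_cells_Vset Rad q i j k l : 0 < Rad -> dist2 q origin = Rad ->
  (i < n)%nat -> (j < n)%nat -> (k < n)%nat -> (l < n)%nat ->
  cell n c rho i j q -> cell n c rho k l q -> distinct_disks c rho i j k l ->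
  Vset Rad n c rho i j q \/ Vset Rad n c rho k l q.
Proof.
  intros HR Hq Hi Hj Hk Hl C1 C2 D.
  pose proof (delta_eq_env_of_cell i j q Hi Hj C1) as E1.
  pose proof (delta_eq_env_of_cell k l q Hk Hl C2) as E2.
  assert (Hne : cij c i j <> cij c k l).
  { intros Heq; destruct D as [D | D]; [contradiction |].
    apply D; unfold delta in E1, E2; rewrite Heq in E1; lra. }
  pose proof (in_boundary_diskO_of_dist Rad q HR Hq) as Hb.
  destruct (classic (in_boundary (cell n c rho i j) q)) as [B | NB]; [left; right; auto |].
  right; right; split; [| exact Hb].
  destruct (nbhd_of_not_in_boundary _ q C1 NB) as [e1 [He1 Hnbhd]].
  intros e He; split; [exists q; rewrite dist2_refl; split; [exact C2 | lra] |].
  pose proof (Rmin_l e e1); pose proof (Rmin_r e e1).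
  destruct (dist2_sub_not_locally_const (cij c i j) (cij c k l) (rhoij rho i j - rhoij rho k l)
              q (Rmin e e1) Hne) as [z [Hz Hzne]]; [now apply Rmin_glb_lt |].
  exists z; split; [| lra].
  intros Cz; pose proof (Cz i j Hi Hj); pose proof (Hnbhd z ltac:(lra) k l Hk Hl).
  unfold delta in *; lra.
Qed.

Lemma Vset_of_cell_change Rad i j x0 q0 : 0 < Rad -> (i < n)%nat -> (j < n)%nat ->
  dist2 x0 origin = Rad -> dist2 q0 origin = Rad ->
  cell n c rho i j x0 -> env q0 < delta c rho i j q0 ->
  exists q, dist2 q origin = Rad /\ Vset Rad n c rho i j q.
Proof.
  intros HR Hi Hj Hx0 Hq0 C0 Hlt.
  destruct (circle_sign_change (fun x => env x - delta c rho i j x) 2 x0 q0)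
    as [q [Hq [Hpos Hnear]]].
  - lra.
  - intros x y; pose proof (Rabs_le_inv _ _ (env_lipschitz x y)).
    pose proof (Rabs_le_inv _ _ (delta_lipschitz i j x y)).
    apply Rabs_le; lra.
  - congruence.
  - rewrite (delta_eq_env_of_cell i j x0 Hi Hj C0); lra.
  - lra.
  - exists q; split; [congruence |]; right.
    split; [| apply in_boundary_diskO_of_dist; congruence].
    intros e He; split.
    + exists q; rewrite dist2_refl; split; [apply cell_of_delta_le_env; lra | lra].
    + destruct (Hnear e He) as [z [Hz Hneg]]; exists z; split; [| exact Hz].
      intros Cz; rewrite (delta_eq_env_of_cell i j z Hi Hj Cz) in Hneg; lra.
Qed.

Lemma Vset_value_on_centered_cell Rad i j x0 i0 j0 p0 : 0 < Rad ->
  (i < n)%nat -> (j < n)%nat -> cij c i j = origin ->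
  dist2 x0 origin = Rad -> cell n c rho i j x0 ->
  (i0 < n)%nat -> (j0 < n)%nat -> Vset Rad n c rho i0 j0 p0 ->
  exists k l p, (k < n)%nat /\ (l < n)%nat /\ Vset Rad n c rho k l p /\
    delta c rho k l p = delta c rho i j x0.
Proof.
  intros HR Hi Hj Hc Hx0 C0 Hi0 Hj0 HV0.
  assert (Hdelta : forall x, delta c rho i j x = dist2 x origin - rhoij rho i j)
    by (intros x; unfold delta; now rewrite Hc).
  assert (Hval : forall q, dist2 q origin = Rad -> delta c rho i j q = delta c rho i j x0)
    by (intros q Hq; rewrite !Hdelta; congruence).
  assert (Hother : (exists k l p, (k < n)%nat /\ (l < n)%nat /\ Vset Rad n c rho k l p /\
                     delta c rho k l p = delta c rho i j x0) \/
                   exists k l p, (k < n)%nat /\ (l < n)%nat /\ diskO Rad p /\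
                     cell n c rho k l p /\ distinct_disks c rho i j k l).
  { destruct HV0 as [(Hv & _ & Hd0) | [Hb0 Hd0]].
    - right; destruct (pick_distinct_cell i j p0 Hi Hj Hv) as (k & l & Hk & Hl & Ck & D).
      exists k, l, p0; auto.
    - pose proof (cell_of_in_boundary i0 j0 p0 Hb0) as C0'.
      pose proof (in_boundary_diskO_dist Rad p0 Hd0) as Hp0.
      destruct (classic (distinct_disks c rho i j i0 j0)) as [D | D].
      + right; exists i0, j0, p0; repeat split; auto; unfold diskO; lra.
      + left; exists i0, j0, p0; repeat split; auto; [right; auto |].
        rewrite <- (delta_not_distinct i j i0 j0 p0 D); auto. }
  destruct Hother as [Done | (k & l & p & Hk & Hl & Hp & Cp & D)]; [exact Done |].
  destruct (exists_circle_point_beyond Rad p HR Hp) as [q0 [Hq0 Hq0p]].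
  assert (Hbelow : delta c rho k l q0 <= delta c rho i j q0).
  { pose proof (dist2_triangle q0 p (cij c k l)); pose proof (Cp i j Hi Hj).
    rewrite !Hdelta in *; unfold delta in *; lra. }
  pose proof (env_le q0 i j Hi Hj).
  destruct (Rlt_dec (env q0) (delta c rho i j q0)) as [Hlt | Hge].
  - destruct (Vset_of_cell_change Rad i j x0 q0 HR Hi Hj Hx0 Hq0 C0 Hlt) as [q [Hq HVq]].
    exists i, j, q; repeat split; auto.
  - assert (Ci : cell n c rho i j q0) by (apply cell_of_delta_le_env; lra).
    assert (Ck : cell n c rho k l q0) by (apply cell_of_delta_le_env; lra).
    destruct (two_cells_Vset Rad q0 i j k l HR Hq0 Hi Hj Hk Hl Ci Ck D) as [HV | HV].
    + exists i, j, q0; repeat split; auto.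
    + exists k, l, q0; repeat split; auto.
      rewrite (delta_eq_env_of_cell k l q0 Hk Hl Ck), <- (Hval q0 Hq0); lra.
Qed.

Section Maximum.
Variables (Rad : R) (x0 : pt).
Hypotheses (HRad : 0 < Rad) (Hn : (0 < n)%nat) (Hx0 : diskO Rad x0)
  (Hmax : forall x, diskO Rad x -> env x <= env x0).

Lemma vertex_of_interior_max : dist2 x0 origin < Rad -> apollonius_vertex n c rho x0.
Proof.
  intros Hint; apply NNPP; intros Hnv.
  destruct (env_attained x0 Hn) as (i1 & j1 & Hi1 & Hj1 & E1).
  assert (C1 : cell n c rho i1 j1 x0) by (apply cell_of_delta_le_env; lra).
  destruct (two_active_of_not_vertex x0 i1 j1 Hnv Hi1 Hj1 C1)
    as (i2 & j2 & Hi2 & Hj2 & C2 & Hcover).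
  pose proof (delta_eq_env_of_cell i2 j2 x0 Hi2 Hj2 C2).
  destruct (env_locally_active x0 Hn) as [g [Hg Hloc]].
  destruct (exists_dir_nonneg_dot2 (sub x0 (cij c i1 j1)) (sub x0 (cij c i2 j2)))
    as (w & Hw & D1 & D2).
  pose proof (Rmin_l g (Rad - dist2 x0 origin)); pose proof (Rmin_r g (Rad - dist2 x0 origin)).
  destruct (exists_small_pos (dist2 w origin) (Rmin g (Rad - dist2 x0 origin)))
    as (t & Ht & Htw); [apply dist2_ge0 | apply Rmin_glb_lt; lra |].
  set (y := along x0 w t).
  assert (Hxy : dist2 x0 y < Rmin g (Rad - dist2 x0 origin))
    by (unfold y; rewrite dist2_sym, dist2_along, Rabs_right; lra).
  assert (Hy : diskO Rad y).
  { unfold diskO; pose proof (dist2_triangle y x0 origin); rewrite dist2_sym in Hxy; lra. }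
  assert (Hfar : forall k l, 0 <= dot (sub x0 (cij c k l)) w ->
                   delta c rho k l x0 < delta c rho k l y).
  { intros k l Hkl; unfold delta; apply Rplus_lt_compat_r, dist2_lt_iff.
    unfold y; rewrite sqdist_along.
    assert (0 < t ^ 2 * dot w w) by (apply Rmult_lt_0_compat; [apply pow_lt |]; lra).
    nra. }
  destruct (Hloc y ltac:(lra)) as (k & l & Hk & Hl & Ck & Ey).
  pose proof (Hmax y Hy); pose proof (Hfar _ _ D1); pose proof (Hfar _ _ D2).
  destruct (Hcover k l Hk Hl Ck) as [S | S];
    rewrite <- (delta_not_distinct _ _ _ _ y S) in Ey; lra.
Qed.

Lemma cij_origin_of_circle_max i j : (i < n)%nat -> (j < n)%nat ->
  dist2 x0 origin = Rad -> cell n c rho i j x0 -> ~ in_boundary (cell n c rho i j) x0 ->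
  cij c i j = origin.
Proof.
  intros Hi Hj Hcirc C0 Hnb.
  destruct (nbhd_of_not_in_boundary _ x0 C0 Hnb) as [e [He Hnbhd]].
  set (C := cij c i j); apply NNPP; intros HC.
  assert (HW : 0 < dot C C).
  { destruct (Rle_lt_or_eq_dec _ _ (dot_self_ge0 C)) as [| E]; [assumption |].
    exfalso; apply HC, dot_self_eq0; auto. }
  assert (Hpos : 0 < dot x0 C).
  { destruct (exists_small_pos (dist2 C origin) e) as (t & Ht & HtC);
      [apply dist2_ge0 | exact He |].
    assert (Hz : dist2 x0 (along x0 C (- t)) < e)
      by (rewrite dist2_sym, dist2_along, Rabs_Ropp, Rabs_right; lra).
    pose proof (cell_dot_center_nonneg i j _ Hi Hj (Hnbhd _ Hz)) as D; fold C in D.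
    replace (dot (along x0 C (- t)) C) with (dot x0 C - t * dot C C) in D
      by (unfold dot, along; cbn [fst snd]; ring).
    assert (0 < t * dot C C) by (apply Rmult_lt_0_compat; lra).
    lra. }
  destruct (rot_away x0 C e Hpos He) as (y & Hy & Hxy & Hfar).
  pose proof (Hmax y ltac:(unfold diskO; lra)) as Hle.
  rewrite <- (delta_eq_env_of_cell i j y Hi Hj (Hnbhd y Hxy)),
          <- (delta_eq_env_of_cell i j x0 Hi Hj C0) in Hle.
  apply dist2_lt_iff in Hfar; unfold delta in Hle; fold C in Hle; lra.
Qed.

Lemma Vset_attains_env_max i0 j0 p0 : (i0 < n)%nat -> (j0 < n)%nat ->
  Vset Rad n c rho i0 j0 p0 ->
  exists i j p, (i < n)%nat /\ (j < n)%nat /\ Vset Rad n c rho i j p /\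
    delta c rho i j p = env x0.
Proof.
  intros Hi0 Hj0 HV0.
  destruct (env_attained x0 Hn) as (i & j & Hi & Hj & E).
  assert (C0 : cell n c rho i j x0) by (apply cell_of_delta_le_env; lra).
  destruct (Rle_lt_or_eq_dec _ _ Hx0) as [Hint | Hcirc].
  - exists i, j, x0; repeat split; auto.
    left; repeat split; auto; now apply vertex_of_interior_max.
  - destruct (classic (in_boundary (cell n c rho i j) x0)) as [B | NB].
    + exists i, j, x0; repeat split; auto.
      right; split; [exact B | now apply in_boundary_diskO_of_dist].
    + rewrite E; apply (Vset_value_on_centered_cell Rad i j x0 i0 j0 p0); auto.
      now apply cij_origin_of_circle_max.
Qed.

Lemma is_min_cover_env_max : is_min_cover Rad n c rho (env x0).
Proof.
  split.
  - intros x Hx; destruct (env_attained x Hn) as (k & l & Hk & Hl & E).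
    exists k, l; repeat split; auto.
    pose proof (Hmax x Hx); unfold delta in E; lra.
  - intros b Hb; destruct (Hb x0 Hx0) as (k & l & Hk & Hl & Hd).
    pose proof (env_le x0 k l Hk Hl); unfold delta in *; lra.
Qed.

Lemma Vset_delta_le_env_max i j p : (i < n)%nat -> (j < n)%nat ->
  Vset Rad n c rho i j p -> delta c rho i j p <= env x0.
Proof.
  intros Hi Hj HV; destruct (Vset_cell_diskO Rad i j p HV) as [Cp Dp].
  rewrite (delta_eq_env_of_cell i j p Hi Hj Cp); now apply Hmax.
Qed.

End Maximum.
End Apollonius.

(** * Existence of the maximum *)

Module Compactness.
Import all_boot all_order all_algebra all_classical all_reals topology normedtype derive
  Rstruct Rstruct_topology.
Import Order.TTheory GRing.Theory Num.Theory numFieldNormedType.Exports.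
Local Open Scope classical_set_scope.

(* Qualified names: MathComp-Analysis has its own [lipschitz] notation. *)
Lemma lipschitz_continuous (g : pt -> R) :
  Submission.lipschitz 1 g -> continuous (g : (R * R)%type -> R).
Proof.
move=> Hg x.
apply: (proj2 (@pseudometric_normed_Zmodule.cvgrPdist_lt R R^o _ (nbhs x) _ g (g x))) => e e0.
exists (ball x.1 (e / 2), ball x.2 (e / 2)).
  by split; apply: nbhsx_ballx; rewrite divr_gt0.
case: x => a b; case=> c d [] /= H1 H2.
rewrite /ball /= in H1 H2.
move/RltP: H1 => H1; move/RltP: H2 => H2; move/RltP: e0 => e0; apply/RltP.
have := Hg (a, b) (c, d); have := dist2_le_abs_sum (a, b) (c, d).
have nE : forall z : R, `|z|%R = Rabs z by [].
rewrite !nE in H1 H2 *; rewrite -(INRE 2) /= in H1 H2.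
rewrite -?RminusE -?RdivE -?RplusE -?R0E -?R1E in H1 H2 e0 *; simpl in *; lra.
Qed.

Lemma exists_max_on_diskO (g : pt -> R) Rad : Rle 0 Rad -> Submission.lipschitz 1 g ->
  exists x0, diskO Rad x0 /\ forall x, diskO Rad x -> Rle (g x) (g x0).
Proof.
move=> HR Hg; pose A : set (R * R)%type := [set x | diskO Rad x].
have [|||x0 Ax0 Hx0] := @compact_EVT_max _ R g A.
- by exists origin; rewrite /A /= /diskO dist2_refl.
- apply: (@subclosed_compact _ A (`[(- Rad)%R, Rad] `*` `[(- Rad)%R, Rad])).
  + have -> : A = (fun x => dist2 x origin) @^-1` [set r | (r <= Rad)%R].
      by rewrite /A; apply/seteqP; split => x /=; rewrite /diskO => /RleP.
    apply: (proj1 (continuous_closedP _)); last exact: closed_le.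
    apply: lipschitz_continuous => x y; rewrite Rmult_1_l.
    exact: dist2_reverse_triangle.
  + apply: compact_setX; exact: segment_compact.
  + move=> x; rewrite /A /= /diskO => H.
    have [/Rabs_le_inv H1 /Rabs_le_inv H2] := Rabs_coord_le x.
    split; rewrite /= in_itv /=; apply/andP; split; apply/RleP; rewrite -?RoppE; lra.
- apply: continuous_subspaceT; exact: lipschitz_continuous.
- exists x0; split; first by move: Ax0; rewrite inE.
  by move=> x Hx; apply/RleP; apply: Hx0; rewrite inE.
Qed.

End Compactness.

Theorem lemma11 (Rad : R) (n : nat) (c : nat -> pt) (rho : nat -> R)
  (hRad : 0 < Rad)
  (hrho : forall i, (i < n)%nat -> 0 <= rho i <= Rad / 2)
  (hV : exists i j p, (i < n)%nat /\ (j < n)%nat /\ Vset Rad n c rho i j p) :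
  exists astar,
    is_min_cover Rad n c rho astar /\
    (exists i j p, (i < n)%nat /\ (j < n)%nat /\ Vset Rad n c rho i j p /\
                   delta c rho i j p = astar) /\
    (forall i j p, (i < n)%nat -> (j < n)%nat -> Vset Rad n c rho i j p ->
                   delta c rho i j p <= astar).
Proof.
  destruct hV as (i0 & j0 & p0 & Hi0 & Hj0 & HV0).
  assert (Hn : (0 < n)%nat) by lia.
  destruct (Compactness.exists_max_on_diskO (env n c rho) Rad) as (x0 & Hx0 & Hmax);
    [lra | apply env_lipschitz |].
  exists (env n c rho x0); split; [| split].
  - now apply is_min_cover_env_max.
  - now apply (Vset_attains_env_max n c rho Rad x0 hRad Hn Hx0 Hmax i0 j0 p0).
  - intros i j p Hi Hj HV; now apply (Vset_delta_le_env_max n c rho Rad x0 Hmax).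
Qed.
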